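(* Let $G$ be a compact Lie group and $(\Omega^\bullet,\nabla)$ a curved differential graded $G$-algebra with $\nabla^2=[\Theta,\cdot]$. For $X\in\mathfrak g$, $t\in\mathbb R$ and $\beta\in\Omega^\bullet$ put $\nabla^{(t,X)}\beta=e^{-t\Theta}\nabla(e^{-tX}\beta)e^{t\Theta}$. Then for all $\beta\in\Omega^0$, $$-\frac{\partial}{\partial t}\big(e^{-t\Theta}(e^{-tX}\beta)e^{t\Theta}\big)=(\nabla+\iota_X)\nabla^{(t,X)}(\beta).$$
   Context: A curved differential graded $G$-algebra: an $\mathbb N$-graded topological algebra $\Omega^\bullet$ with a degree-preserving $G$-action by automorphisms (infinitesimal action $\mathcal L_X$), a $G$-equivariant degree $+1$ derivation $\nabla$, and $G$-equivariant degree $-1$ derivations $\iota_X$ ($X\in\mathfrak g$, linear in $X$) with $\iota_X^2=0$, $\nabla\iota_X+\iota_X\nabla=\mathcal L_X$, such that $\nabla^2=[\Theta,\cdot]$ for some $\Theta\in\Omega^2$ with $\mathcal L_X\Theta=0$ and with $\nabla\Theta+\iota_X\Theta$ central for all $X$. $e^{-tX}\beta$ denotes the action of $\exp(-tX)\in G$ on $\beta$. *)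

From HB Require Import structures.
From mathcomp Require Import all_boot all_order all_algebra.
From mathcomp Require Import all_classical all_reals all_analysis.

Set Implicit Arguments.
Unset Strict Implicit.
Unset Printing Implicit Defensive.

Import Order.TTheory GRing.Theory Num.Theory.
Import numFieldNormedType.Exports.
Local Open Scope classical_set_scope.
Local Open Scope ring_scope.

(* A real algebra whose underlying vector space is a topological vector space.
   Continuity of the multiplication is imposed separately (topalg_axioms). *)
#[short(type="topAlgType")]
HB.structure Definition TopAlgebra (R : numDomainType) :=
  {A of TopologicalLmodule R A & GRing.Algebra R A}.

Section Defs.
Variable R : realType.
Variable A : topAlgType R.

Definition topalg_axioms : Prop :=
  hausdorff_space A /\ continuous (fun p : A * A => p.1 * p.2).

Definition has_deriv (f : R -> A) (t : R) (v : A) : Prop :=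
  (fun h : R => h^-1 *: (f (t + h) - f t)) @ (0 : R)^' --> v.

Definition exp_series (a : A) : nat -> A := fun k => (k`!%:R)^-1 *: a ^+ k.
Definition expo (a : A) : A :=
  xget 0 (fun l : A => series (exp_series a) @ \oo --> l).

(* N-grading Omega = (+)_k Omega^k, hom k = Omega^k *)
Definition graded_axioms (hom : nat -> set A) : Prop :=
  (forall k, hom k 0 /\ (forall c a b, hom k a -> hom k b -> hom k (c *: a + b)))
  /\ hom 0%N 1
  /\ (forall i j a b, hom i a -> hom j b -> hom (i + j)%N (a * b))
  /\ (forall a, exists n (c : nat -> A),
         (forall k, hom k (c k)) /\ a = \sum_(k < n) c k)
  /\ (forall n (c : nat -> A), (forall k, hom k (c k)) ->
         \sum_(k < n) c k = 0 -> forall k, (k < n)%N -> c k = 0)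
  /\ (forall k, exists p : A -> A, continuous p /\ linear p
         /\ (forall a, hom k a -> p a = a)
         /\ (forall j a, j != k -> hom j a -> p a = 0)).

Definition even_elt (hom : nat -> set A) (a : A) : Prop :=
  exists n (c : nat -> A), (forall k, hom (k.*2) (c k)) /\ a = \sum_(k < n) c k.
Definition odd_elt (hom : nat -> set A) (a : A) : Prop :=
  exists n (c : nat -> A), (forall k, hom (k.*2.+1) (c k)) /\ a = \sum_(k < n) c k.

Definition graded_central (hom : nat -> set A) (z : A) : Prop :=
  exists z0 z1, even_elt hom z0 /\ odd_elt hom z1 /\ z = z0 + z1 /\
    forall j a, hom j a -> z0 * a = a * z0 /\ z1 * a = (-1) ^+ j *: (a * z1).

Definition derivation_p1 (hom : nat -> set A) (D : A -> A) : Prop :=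
  linear D
  /\ (forall k a, hom k a -> hom k.+1 (D a))
  /\ (forall k a b, hom k a -> D (a * b) = D a * b + (-1) ^+ k *: (a * D b)).

(* derivation of degree -1 (Omega^(-1) = 0) *)
Definition derivation_m1 (hom : nat -> set A) (D : A -> A) : Prop :=
  linear D
  /\ (forall a, hom 0%N a -> D a = 0)
  /\ (forall k a, hom k.+1 a -> hom k (D a))
  /\ (forall k a b, hom k a -> D (a * b) = D a * b + (-1) ^+ k *: (a * D b)).

End Defs.

Section GroupDefs.
Variable R : realType.
Variable A : topAlgType R.
Variable G : groupType.
Variable g : lmodType R.

(* expG : Lie algebra -> group, restricted to one-parameter subgroups *)
Definition one_param (expG : g -> G) : Prop :=
  forall X s t, expG ((s + t) *: X) = (expG (s *: X) * expG (t *: X))%g.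

Definition is_adjoint (expG : g -> G) (Ad : G -> g -> g) : Prop :=
  forall x X t, expG (t *: Ad x X) = (x * expG (t *: X) * x^-1)%g.

Definition alg_action (hom : nat -> set A) (act : G -> A -> A) : Prop :=
  (forall a, act 1%g a = a)
  /\ (forall x y a, act (x * y)%g a = act x (act y a))
  /\ (forall x, linear (act x) /\ act x 1 = 1
        /\ (forall a b, act x (a * b) = act x a * act x b)
        /\ continuous (act x)
        /\ (forall k a, hom k a -> hom k (act x a))).

Definition infinitesimal_action (expG : g -> G) (act : G -> A -> A)
    (L : g -> A -> A) : Prop :=
  forall X a, has_deriv (fun s : R => act (expG (s *: X)) a) 0 (L X a).

Definition curved_dgGa (hom : nat -> set A) (act : G -> A -> A)
    (expG : g -> G) (Ad : G -> g -> g) (L : g -> A -> A)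
    (nabla : A -> A) (iota : g -> A -> A) (Theta : A) : Prop :=
  derivation_p1 hom nabla
  /\ (forall x a, act x (nabla a) = nabla (act x a))
  /\ (forall X, derivation_m1 hom (iota X))
  /\ (forall c X Y a, iota (c *: X + Y) a = c *: iota X a + iota Y a)
  /\ (forall x X a, act x (iota X a) = iota (Ad x X) (act x a))
  /\ (forall X a, iota X (iota X a) = 0)
  /\ (forall X a, nabla (iota X a) + iota X (nabla a) = L X a)
  /\ hom 2%N Theta
  (* nabla^2 = [Theta, .]; Theta is even so the graded commutator is plain *)
  /\ (forall a, nabla (nabla a) = Theta * a - a * Theta)
  /\ (forall X, L X Theta = 0)
  /\ (forall X, graded_central hom (nabla Theta + iota X Theta)).

End GroupDefs.

(* Since Theta has degree 2 and the grading is an algebraic direct sum with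
   continuous projections, convergence of the exponential series forces Theta to
   be nilpotent, so e^{s Theta} is a polynomial in s and everything can be
   differentiated termwise.  The operator D = nabla + iota_X is an odd derivation,
   and D Theta is graded central of odd degree, hence supercommutes with every
   homogeneous element; consequently D(e^{-tTheta} y e^{tTheta}) =
   e^{-tTheta} (D y) e^{tTheta}.  Applied to y = nabla(e^{-tX} beta) with
   D(nabla b) = [Theta, b] + iota_X nabla b and, for beta of degree 0,
   d/dt e^{-tX} beta = -iota_X nabla (e^{-tX} beta), this is exactly the product
   rule applied to e^{-tTheta} (e^{-tX} beta) e^{tTheta}. *)

From HB Require Import structures.
From mathcomp Require Import all_boot all_order all_algebra.
From mathcomp Require Import all_classical all_reals all_analysis.
From mathcomp Require Import zify.

Set Implicit Arguments.
Unset Strict Implicit.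
Unset Printing Implicit Defensive.
Import Order.TTheory GRing.Theory Num.Theory.
Import numFieldNormedType.Exports.
Local Open Scope classical_set_scope.
Local Open Scope ring_scope.

Section TopAlgebraCalculus.
Variables (R : realType) (A : topAlgType R).
Hypothesis HA : topalg_axioms A.

Lemma topalg_cvgD {T : Type} {F : set_system T} {FF : Filter F} (f g : T -> A) (a b : A) :
  f @ F --> a -> g @ F --> b -> (fun x => f x + g x) @ F --> a + b.
Proof.
move=> fa gb; apply: (@continuous2_cvg T A A A F FF f g (fun x y => x + y)) => //.
exact: (@add_continuous A (a, b)).
Qed.

Lemma topalg_cvgZ {T : Type} {F : set_system T} {FF : Filter F}
    (s : T -> R) (f : T -> A) (k : R) (a : A) :
  s @ F --> k -> f @ F --> a -> (fun x => s x *: f x) @ F --> k *: a.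
Proof.
move=> sk fa; apply: (@continuous2_cvg T R^o A A F FF s f (fun x y => x *: y)) => //.
exact: (@scale_continuous R A (k, a)).
Qed.

Lemma topalg_cvgM {T : Type} {F : set_system T} {FF : Filter F} (f g : T -> A) (a b : A) :
  f @ F --> a -> g @ F --> b -> (fun x => f x * g x) @ F --> a * b.
Proof.
move=> fa gb; apply: (@continuous2_cvg T A A A F FF f g (fun x y => x * y)) => //.
by case: HA => _ /(_ (a, b)).
Qed.

Lemma has_deriv_cst (a : A) t : has_deriv (fun _ : R => a) t 0.
Proof.
rewrite /has_deriv (_ : (fun h : R => h^-1 *: (a - a)) = fun _ => 0).
  exact: cvg_cst.
by apply/funext => h; rewrite subrr scaler0.
Qed.

Lemma has_derivD (f g : R -> A) t u v : has_deriv f t u -> has_deriv g t v ->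
  has_deriv (fun s => f s + g s) t (u + v).
Proof.
move=> fu gv; rewrite /has_deriv.
under eq_fun => h do rewrite opprD addrACA scalerDr.
exact: topalg_cvgD.
Qed.

Lemma has_deriv_sum (I : Type) (r : seq I) (F : I -> R -> A) (D : I -> A) t :
  (forall i, has_deriv (F i) t (D i)) ->
  has_deriv (fun s => \sum_(i <- r) F i s) t (\sum_(i <- r) D i).
Proof.
move=> FD; elim: r => [|i r IHr].
  rewrite big_nil (_ : (fun s => _) = fun _ => 0); first exact: has_deriv_cst.
  by apply/funext => s; rewrite big_nil.
rewrite big_cons (_ : (fun s => _) = fun s => F i s + \sum_(j <- r) F j s).
  exact: has_derivD.
by apply/funext => s; rewrite big_cons.
Qed.

Lemma has_deriv_cvg (f : R -> A) t u : has_deriv f t u ->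
  (fun h : R => f (t + h)) @ (0 : R)^' --> f t.
Proof.
move=> fu.
have id0 : (fun h : R => h) @ (0 : R)^' --> (0 : R) by exact: nbhs_dnbhs.
have := topalg_cvgD (cvg_cst (f t)) (topalg_cvgZ id0 fu).
rewrite scale0r addr0 => lim.
apply: (@cvg_trans _ ((fun h : R => f t + h *: (h^-1 *: (f (t + h) - f t))) @ 0^')); last exact: lim.
apply: near_eq_cvg.
near=> h; have h_neq0 : h != 0 by near: h; exact: nbhs_dnbhs_neq.
by rewrite scalerA divff // scale1r addrC subrK.
Unshelve. all: by end_near.
Qed.

Lemma has_derivM (f g : R -> A) t u v : has_deriv f t u -> has_deriv g t v ->
  has_deriv (fun s => f s * g s) t (u * g t + f t * v).
Proof.
move=> fu gv; rewrite /has_deriv.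
rewrite (_ : (fun h : R => h^-1 *: (f (t + h) * g (t + h) - f t * g t)) =
   fun h => (h^-1 *: (f (t + h) - f t)) * g (t + h) + f t * (h^-1 *: (g (t + h) - g t))).
  exact: (topalg_cvgD (topalg_cvgM fu (has_deriv_cvg gv)) (topalg_cvgM (cvg_cst (f t)) gv)).
apply/funext => h; rewrite -scalerAl -scalerAr -scalerDr.
by rewrite mulrBl mulrBr addrA subrK.
Qed.

Lemma has_derivZl (c : R -> R) (c' : R) (a : A) (t : R) : is_derive t 1 c c' ->
  has_deriv (fun s => c s *: a) t (c' *: a).
Proof.
case=> dc <-; rewrite /has_deriv.
under eq_fun => h do rewrite -scalerBl scalerA.
apply: topalg_cvgZ (cvg_cst a).
apply: cvg_trans dc; apply: near_eq_cvg; apply: nearW => h /=.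
by rewrite /shift -[h%:A]/(h * 1) mulr1 (addrC h t).
Qed.

End TopAlgebraCalculus.

Definition linfun_of (R : pzRingType) (U V : lmodType R) (f : U -> V) (lf : linear f) :
  {linear U -> V} := HB.pack f (GRing.isLinear.Build R U V *:%R f lf).

Section GradedAlgebra.
Variables (R : realType) (A : topAlgType R) (hom : nat -> set A).
Hypothesis Hg : graded_axioms hom.

Definition graded_proj (k : nat) (p : A -> A) : Prop :=
  (forall a, hom k a -> p a = a) /\ (forall j a, j != k -> hom j a -> p a = 0).

Lemma hom0 k : hom k 0.
Proof. by case: Hg => /(_ k) []. Qed.

Lemma hom1 : hom 0 1.
Proof. by case: Hg => _ []. Qed.

Lemma homZ k c a : hom k a -> hom k (c *: a).
Proof. by case: Hg => /(_ k) [hom_k0 homDZ] _ ha; rewrite -[_ *: _]addr0; exact: homDZ. Qed.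

Lemma homD k a b : hom k a -> hom k b -> hom k (a + b).
Proof. by case: Hg => /(_ k) [_ homDZ] _ ha hb; rewrite -[a]scale1r; exact: homDZ. Qed.

Lemma homM i j a b : hom i a -> hom j b -> hom (i + j)%N (a * b).
Proof. by case: Hg => _ [_ [homM _]]; exact: homM. Qed.

Lemma homX m a k : hom m a -> hom (k * m)%N (a ^+ k).
Proof.
move=> ha; elim: k => [|k IHk]; first by rewrite expr0; exact: hom1.
by rewrite exprS mulSn; exact: homM.
Qed.

Lemma graded_projP k : exists p : {linear A -> A}, continuous p /\ graded_proj k p.
Proof.
case: Hg => _ [_ [_ [_ [_ /(_ k) [p [p_cont [p_lin p_proj]]]]]]].
by exists (linfun_of p_lin).
Qed.

Lemma graded_proj_sum (p : {linear A -> A}) k n (deg : nat -> nat) (F : nat -> A) :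
  graded_proj k p -> (forall i, hom (deg i) (F i)) ->
  p (\sum_(i < n) F i) = \sum_(i < n | deg i == k) F i.
Proof.
move=> [p_id p_0] homF; rewrite raddf_sum [RHS]big_mkcond /=.
apply: eq_bigr => i _; case: eqP => [deg_i|/eqP deg_i]; last exact: p_0 deg_i _.
by apply: p_id; rewrite -deg_i.
Qed.

Hypothesis HA : topalg_axioms A.

Lemma exp_series_cvg_nilpotent d (a : A) : hom d.+1 a ->
  (exists l : A, series (exp_series a) @ \oo --> l) -> exists n, a ^+ n = 0.
Proof.
move=> ha [l series_l].
have [n [c [homc l_sum]]] : exists n (c : nat -> A),
    (forall k, hom k (c k)) /\ l = \sum_(k < n) c k by case: Hg => _ [_ [_ []]].
(* the projection onto degree [n * d.+1], above every component of [l], kills [l]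
   but keeps the term [a ^+ n / n`!] of every long partial sum *)
have [p [p_cont p_proj]] := graded_projP (n * d.+1)%N.
have hom_term i : hom (i * d.+1)%N (exp_series a i) by apply: homZ; exact: homX.
exists n.
have p_partial : (fun j => p (series (exp_series a) j)) @ \oo --> exp_series a n.
  apply: cvg_near_cst; near=> j.
  rewrite /series /= big_mkord (graded_proj_sum _ p_proj hom_term).
  rewrite (eq_bigl (fun i : 'I_j => i == n :> nat)); last by move=> i; rewrite eqn_pmul2r.
  by rewrite big_ord1_eq ifT //; near: j; exact: nbhs_infty_gt.
have p_l : p l = 0.
  rewrite l_sum (graded_proj_sum _ p_proj homc); apply: big1 => i /eqP i_deg.
  by have := ltn_ord i; rewrite i_deg; nia.
have term_n : exp_series a n = 0.
  rewrite -p_l; apply: (cvg_unique (proj1 HA) p_partial).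
  exact: (continuous_cvg _ (p_cont _) series_l).
move: term_n; rewrite /exp_series => /(congr1 ( *:%R (n`!%:R))).
by rewrite scalerA mulfV ?scale1r ?scaler0 // pnatr_eq0 -lt0n fact_gt0.
Unshelve. all: by end_near.
Qed.

End GradedAlgebra.

Lemma is_derive_exprn (R : realType) (k : nat) (t : R) :
  is_derive t 1 (fun s : R => s ^+ k) (k%:R * t ^+ k.-1).
Proof.
rewrite -[X in is_derive _ _ _ X]mulr1 -exprfctE.
exact (is_deriveX k (is_derive_id t (1 : R))).
Qed.

Lemma natrS_mul_factSV (R : numFieldType) (i : nat) (x : R) :
  i.+1%:R * x * (i.+1`!%:R)^-1 = x * (i`!%:R)^-1.
Proof.
have Si_neq0 : (i.+1%:R : R) != 0 by rewrite pnatr_eq0.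
have fact_neq0 : (i`!%:R : R) != 0 by rewrite pnatr_eq0 -lt0n fact_gt0.
by rewrite factS natrM invfM mulrAC mulrA mulfV // mul1r mulrC.
Qed.

Section ExpPoly.
Variables (R : realType) (A : topAlgType R).

Definition exp_poly (a : A) (n : nat) (r : R) : A :=
  \sum_(k < n.+1) r ^+ k *: ((k`!%:R)^-1 *: a ^+ k).

Lemma exp_poly_comm (a b : A) n r : GRing.comm b a -> GRing.comm b (exp_poly a n r).
Proof.
move=> ba; apply: commr_sum => k _.
by rewrite /GRing.comm -!scalerAl -!scalerAr (commrX k ba).
Qed.

Lemma expo_nilpotent (a : A) n r : topalg_axioms A -> a ^+ n = 0 ->
  expo (r *: a) = exp_poly a n r.
Proof.
move=> HA a_n.
have a_k k : (n <= k)%N -> a ^+ k = 0 by move=> /subnKC <-; rewrite exprD a_n mul0r.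
have series_cst : series (exp_series (r *: a)) @ \oo --> exp_poly a n r.
  apply: cvg_near_cst; near=> j.
  have nj : (n.+1 <= j)%N by near: j; exact: nbhs_infty_ge.
  rewrite /series /= (big_cat_nat (leq0n n.+1) nj) /= [X in _ + X]big1_seq ?addr0.
    by rewrite big_mkord; apply: eq_bigr => k _; rewrite /exp_series exprZn !scalerA mulrC.
  move=> k /andP[_]; rewrite mem_index_iota => /andP[/ltnW nk _].
  by rewrite /exp_series exprZn a_k // !scaler0.
rewrite /expo; apply: xget_unique => // l series_l.
exact: (cvg_unique (proj1 HA) series_l series_cst).
Unshelve. all: by end_near.
Qed.

Lemma exp_poly_termwise_deriv (a : A) n x : a ^+ n = 0 ->
  \sum_(k < n.+1) (k%:R * x ^+ k.-1) *: ((k`!%:R)^-1 *: a ^+ k) = a * exp_poly a n x.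
Proof.
move=> a_n; rewrite /exp_poly big_ord_recl /= mul0r scale0r add0r.
rewrite big_ord_recr /= a_n !scaler0 addr0 mulr_sumr; apply: eq_bigr => i _.
by rewrite /bump /= add1n !scalerA natrS_mul_factSV exprS -!scalerAr.
Qed.

Lemma has_deriv_exp_poly (a : A) n t : a ^+ n = 0 ->
  has_deriv (exp_poly a n) t (a * exp_poly a n t).
Proof.
move=> a_n; rewrite -exp_poly_termwise_deriv //.
apply: has_deriv_sum => k; apply: has_derivZl; exact: is_derive_exprn.
Qed.

End ExpPoly.

Section GradedCentre.
Variables (R : realType) (A : topAlgType R) (hom : nat -> set A).
Hypothesis Hg : graded_axioms hom.

Lemma odd_elt_hom k a : hom k.*2.+1 a -> odd_elt hom a.
Proof.
move=> ha; exists k.+1, (fun i => if i == k then a else 0); split.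
  by move=> i; case: eqP => [->|_] //; exact: hom0.
rewrite big_ord_recr /= eqxx big1 ?add0r // => i _.
by rewrite ifN // neq_ltn ltn_ord.
Qed.

Lemma odd_eltN a : odd_elt hom a -> odd_elt hom (- a).
Proof.
move=> [n [c [homc ->]]]; exists n, (fun i => - c i); split; last by rewrite sumrN.
by move=> i; rewrite -scaleN1r; exact: homZ.
Qed.

Lemma odd_eltD a b : odd_elt hom a -> odd_elt hom b -> odd_elt hom (a + b).
Proof.
move=> [m [c [homc ->]]] [n [e [home ->]]].
exists (maxn m n), (fun i => (if (i < m)%N then c i else 0) + (if (i < n)%N then e i else 0)).
split; first by move=> i; apply: (homD Hg); case: ifP => _ //; exact: hom0.
rewrite big_split /=; congr (_ + _).
  by rewrite (big_ord_widen (maxn m n) c (leq_maxl m n)) [LHS]big_mkcond.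
by rewrite (big_ord_widen (maxn m n) e (leq_maxr m n)) [LHS]big_mkcond.
Qed.

Lemma even_odd_elt_eq0 a : even_elt hom a -> odd_elt hom a -> a = 0.
Proof.
move=> [n [c [homc a_even]]] [m [e [home a_odd]]].
rewrite a_even; apply: big1 => i _.
have [p [_ p_proj]] := graded_projP Hg (i : nat).*2.
transitivity (p a).
  rewrite a_even (graded_proj_sum _ p_proj homc).
  rewrite (eq_bigl (pred1 i)) ?big_pred1_eq // => j.
  by rewrite /= -!muln2 eqn_pmul2r.
rewrite a_odd (graded_proj_sum _ p_proj home); apply: big1 => j /eqP /(congr1 odd).
by rewrite /= !odd_double.
Qed.

(* a graded-central element of odd degree has vanishing even part, hence
   anticommutes with odd elements and commutes with even ones *)
Lemma graded_central_odd_elt z : graded_central hom z -> odd_elt hom z ->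
  forall j y, hom j y -> z * y = (-1) ^+ j *: (y * z).
Proof.
move=> [z0 [z1 [z0_even [z1_odd [z_sum z_comm]]]]] z_odd j y hy.
have z0_eq0 : z0 = 0.
  apply: even_odd_elt_eq0 => //; rewrite (_ : z0 = z + - z1); last by rewrite z_sum addrK.
  exact: odd_eltD (odd_eltN z1_odd).
by have [_] := z_comm j y hy; rewrite z_sum z0_eq0 add0r.
Qed.

End GradedCentre.

Section Derivation.
Variables (R : realType) (A : topAlgType R) (hom : nat -> set A).
Hypothesis Hg : graded_axioms hom.
Variable D : {linear A -> A}.
Hypothesis D_Leibniz :
  forall k a b, hom k a -> D (a * b) = D a * b + (-1) ^+ k *: (a * D b).

Lemma derivation1 : D 1 = 0.
Proof.
have := D_Leibniz 1 (hom1 Hg); rewrite !mul1r mulr1 expr0 scale1r => D1.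
by apply: (addrI (D 1)); rewrite addr0 -D1.
Qed.

Lemma derivation_exp_polyMl d theta n x w : hom d.*2 theta ->
  D (exp_poly theta n x * w) = D (exp_poly theta n x) * w + exp_poly theta n x * D w.
Proof.
move=> theta_even.
rewrite /exp_poly mulr_suml !linear_sum !mulr_suml -big_split; apply: eq_bigr => k _.
have hom_k : hom (k * d.*2)%N (x ^+ k *: ((k`!%:R)^-1 *: theta ^+ k)).
  by do 2 apply: homZ => //; exact: homX.
by rewrite (D_Leibniz _ hom_k) -signr_odd oddM odd_double andbF expr0 scale1r.
Qed.

Lemma derivationX d theta k : hom d.*2 theta -> GRing.comm theta (D theta) ->
  D (theta ^+ k.+1) = k.+1%:R *: (D theta * theta ^+ k).
Proof.
move=> theta_even theta_Dtheta.
elim: k => [|k IHk]; first by rewrite expr1 expr0 mulr1 scale1r.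
rewrite exprS (D_Leibniz _ theta_even) IHk -signr_odd odd_double expr0 scale1r.
rewrite -scalerAr mulrA theta_Dtheta -mulrA -exprS.
by rewrite -[X in X + _]scale1r -scalerDl [1 + _]addrC natr1.
Qed.

Lemma derivation_exp_poly d theta n x :
  hom d.*2 theta -> GRing.comm theta (D theta) -> theta ^+ n = 0 ->
  D (exp_poly theta n x) = x *: (D theta * exp_poly theta n x).
Proof.
move=> theta_even theta_Dtheta theta_n.
rewrite /exp_poly linear_sum big_ord_recl /= expr0 !linearZ /= derivation1 !scaler0 add0r.
rewrite big_ord_recr /= theta_n !scaler0 addr0 mulr_sumr scaler_sumr; apply: eq_bigr => i _.
rewrite !linearZ /= /bump /= add1n (derivationX _ theta_even theta_Dtheta).
rewrite -!scalerAr !scalerA; congr (_ *: _).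
by rewrite mulrAC [_ * i.+1%:R]mulrC natrS_mul_factSV exprS -mulrA [_ * _^-1]mulrC.
Qed.

Lemma derivation_exp_poly_conj d theta n t j y :
  hom d.*2 theta -> theta ^+ n = 0 ->
  (forall i z, hom i z -> D theta * z = (-1) ^+ i *: (z * D theta)) -> hom j y ->
  D (exp_poly (- theta) n t * y * exp_poly theta n t) =
  exp_poly (- theta) n t * D y * exp_poly theta n t.
Proof.
move=> theta_even theta_n Dtheta_supercomm hy.
have Dtheta_theta : GRing.comm (D theta) theta.
  by rewrite /GRing.comm (Dtheta_supercomm _ _ theta_even) -signr_odd odd_double scale1r.
have Ntheta_even : hom d.*2 (- theta) by rewrite -scaleN1r; exact: homZ.
have Ntheta_DNtheta : GRing.comm (- theta) (D (- theta)).
  by rewrite /GRing.comm raddfN !mulrNN Dtheta_theta.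
have Ntheta_n : (- theta) ^+ n = 0 by rewrite exprNn theta_n mulr0.
set a := exp_poly (- theta) n t; set q := exp_poly theta n t.
have Dtheta_a : GRing.comm (D theta) a by apply/exp_poly_comm/commrN.
rewrite -mulrA (derivation_exp_polyMl _ _ _ Ntheta_even) (D_Leibniz _ hy).
rewrite (derivation_exp_poly _ Ntheta_even Ntheta_DNtheta Ntheta_n).
rewrite (derivation_exp_poly _ theta_even (esym Dtheta_theta) theta_n) -/a -/q.
(* the terms [-t D theta] and [t D theta] produced by the two exponential factors
   cancel because [D theta] supercommutes with [y] *)
rewrite mulrDr addrCA mulrA -[RHS]addr0; congr (_ + _).
rewrite raddfN mulNr -scalerAl mulNr scalerN Dtheta_a -mulrA.
rewrite [D theta * (y * q)]mulrA (Dtheta_supercomm _ _ hy).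
apply/eqP; rewrite addrC subr_eq0; apply/eqP.
by rewrite -!scalerAl -!scalerAr !scalerA mulrC !mulrA.
Qed.

End Derivation.

Section OneParameterAction.
Variables (R : realType) (A : topAlgType R) (G : groupType) (g : lmodType R)
  (hom : nat -> set A) (act : G -> A -> A) (expG : g -> G) (L : g -> A -> A).
Hypothesis Hop : one_param expG.
Hypothesis Hact : alg_action hom act.
Hypothesis Hinf : infinitesimal_action expG act L.

Lemma act_hom x k a : hom k a -> hom k (act x a).
Proof. by case: Hact => _ [_ /(_ x) [_ [_ [_ [_]]]]]; apply. Qed.

Lemma expG0 X : expG (0 *: X) = 1%g.
Proof. by apply: (@mulgI _ (expG (0 *: X))); rewrite mulg1 -Hop addr0. Qed.

Lemma has_deriv_act_expG X a t :
  has_deriv (fun s => act (expG (s *: X)) a) t (L X (act (expG (t *: X)) a)).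
Proof.
case: Hact => act1 [actM _].
have := @Hinf X (act (expG (t *: X)) a); rewrite /has_deriv.
apply: cvg_trans; apply: near_eq_cvg; apply: nearW => h.
by rewrite add0r expG0 act1 -actM -Hop (addrC h t).
Qed.

End OneParameterAction.

Section CurvedDGAlgebra.
Variables (R : realType) (A : topAlgType R) (G : groupType) (g : lmodType R)
  (hom : nat -> set A) (act : G -> A -> A) (expG : g -> G) (Ad : G -> g -> g)
  (L : g -> A -> A) (nabla : A -> A) (iota : g -> A -> A) (Theta : A).
Hypothesis Hcurv : curved_dgGa hom act expG Ad L nabla iota Theta.

Lemma curvature_hom : hom 2 Theta.
Proof. by case: Hcurv => _ [_ [_ [_ [_ [_ [_ []]]]]]]. Qed.

Lemma nabla_hom k a : hom k a -> hom k.+1 (nabla a).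
Proof. by case: Hcurv => [[_ [nabla_deg _]] _]; exact: nabla_deg. Qed.

Lemma iota_oppX X a : iota (- X) a = - iota X a.
Proof.
case: Hcurv => _ [_ [_ [iota_lin _]]].
exact: (raddfN (linfun_of (fun c Y Z => iota_lin c Y Z a)) X).
Qed.

Lemma cartan_hom0 X b : hom 0 b -> L X b = iota X (nabla b).
Proof.
case: Hcurv => [[lin_nabla _] [_ [iota_der [_ [_ [_ [cartan _]]]]]]] hb.
have nabla0 : nabla 0 = 0 := raddf0 (linfun_of lin_nabla).
by have [_ [iota0 _]] := iota_der X; rewrite -cartan iota0 // nabla0 add0r.
Qed.

Lemma cartan_diff_linear X : linear (fun a => nabla a + iota X a).
Proof.
case: Hcurv => [[lin_nabla _] [_ [/(_ X) [lin_iota _] _]]] c u v.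
by rewrite lin_nabla lin_iota scalerDr addrACA.
Qed.

Definition cartan_diff X : {linear A -> A} := linfun_of (cartan_diff_linear X).

Lemma cartan_diff_Leibniz X k a b : hom k a ->
  cartan_diff X (a * b) = cartan_diff X a * b + (-1) ^+ k *: (a * cartan_diff X b).
Proof.
case: Hcurv => [[_ [_ nabla_Leibniz]] [_ [/(_ X) [_ [_ [_ iota_Leibniz]]] _]]] ha /=.
rewrite (nabla_Leibniz _ _ b ha) (iota_Leibniz _ _ b ha).
by rewrite mulrDl mulrDr scalerDr addrACA.
Qed.

Lemma cartan_diff_nabla X b :
  cartan_diff X (nabla b) = Theta * b - b * Theta + iota X (nabla b).
Proof. by case: Hcurv => _ [_ [_ [_ [_ [_ [_ [_ [nabla2 _]]]]]]]] /=; rewrite nabla2. Qed.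

Hypothesis Hg : graded_axioms hom.

Lemma cartan_diff_curvature_supercomm X j y : hom j y ->
  cartan_diff X Theta * y = (-1) ^+ j *: (y * cartan_diff X Theta).
Proof.
have hom_Theta := curvature_hom.
case: Hcurv => _ [_ [/(_ X) [_ [_ [iota_deg _]]] rest]].
apply: (graded_central_odd_elt Hg); first by case: rest => _ [_ [_ [_ [_ [_ [_ /(_ X)]]]]]].
apply: (odd_eltD Hg).
  by apply: (odd_elt_hom Hg (k := 1)); exact: nabla_hom.
by apply: (odd_elt_hom Hg (k := 0)); exact: iota_deg.
Qed.

End CurvedDGAlgebra.

Theorem lemma3p7 (R : realType) (A : topAlgType R) (G : groupType)
  (g : lmodType R) (hom : nat -> set A) (act : G -> A -> A)
  (expG : g -> G) (Ad : G -> g -> g) (L : g -> A -> A)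
  (nabla : A -> A) (iota : g -> A -> A) (Theta : A) :
  topalg_axioms A ->
  graded_axioms hom ->
  one_param expG ->
  is_adjoint expG Ad ->
  alg_action hom act ->
  infinitesimal_action expG act L ->
  curved_dgGa hom act expG Ad L nabla iota Theta ->
  (forall t : R, exists l : A, series (exp_series (t *: Theta)) @ \oo --> l) ->
  forall (X : g) (t : R) (beta : A), hom 0%N beta ->
  let nabla_tX := fun b : A =>
    expo (- t *: Theta) * nabla (act (expG (- t *: X)) b) * expo (t *: Theta) in
  has_deriv
    (fun s : R => expo (- s *: Theta) * act (expG (- s *: X)) beta * expo (s *: Theta))
    t
    (- (nabla (nabla_tX beta) + iota X (nabla_tX beta))).
Proof.
move=> HA Hg Hop _ Hact Hinf Hcurv Hexp X t beta beta0 nabla_tX.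
have hom_Theta := curvature_hom Hcurv.
have [n Theta_n] : exists n, Theta ^+ n = 0.
  apply: (exp_series_cvg_nilpotent Hg HA (d := 1) hom_Theta).
  by have := Hexp 1; rewrite scale1r.
have NTheta_n : (- Theta) ^+ n = 0 by rewrite exprNn Theta_n mulr0.
(* writing [- s *: Theta] as [s *: - Theta] puts both exponentials in the form
   [exp_poly _ n s] and the action in the form [act (expG (s *: _))] *)
have -> : (fun s => expo (- s *: Theta) * act (expG (- s *: X)) beta * expo (s *: Theta)) =
    fun s => exp_poly (- Theta) n s * act (expG (s *: - X)) beta * exp_poly Theta n s.
  apply/funext => s.
  by rewrite !scaleNr -!scalerN (expo_nilpotent _ HA NTheta_n) (expo_nilpotent _ HA Theta_n).
rewrite /nabla_tX !scaleNr -!scalerN (expo_nilpotent _ HA NTheta_n) (expo_nilpotent _ HA Theta_n).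
set a := exp_poly (- Theta) n t; set q := exp_poly Theta n t.
set bt := act (expG (t *: - X)) beta.
have bt0 : hom 0 bt := act_hom Hact _ beta0.
have Theta_a : GRing.comm Theta a by apply/exp_poly_comm/commrN.
have -> : - (nabla (a * nabla bt * q) + iota X (a * nabla bt * q)) =
          (- Theta * a * bt + a * L (- X) bt) * q + a * bt * (Theta * q).
  rewrite -[nabla _ + _]/(cartan_diff Hcurv X _).
  rewrite (derivation_exp_poly_conj Hg (cartan_diff_Leibniz Hcurv X) (d := 1) _ hom_Theta
    Theta_n (cartan_diff_curvature_supercomm Hcurv Hg X) (nabla_hom Hcurv bt0)).
  rewrite (cartan_diff_nabla Hcurv) (cartan_hom0 Hcurv _ bt0) (iota_oppX Hcurv).
  rewrite -/a -/q mulNr Theta_a.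
  by rewrite !(mulrDr, mulrDl, mulrN, mulNr, opprD, opprK, mulrA) addrAC.
exact (has_derivM HA (has_derivM HA (has_deriv_exp_poly (t := t) NTheta_n)
  (has_deriv_act_expG Hop Hact Hinf (X := - X) (a := beta) (t := t)))
  (has_deriv_exp_poly (t := t) Theta_n)).
Qed.
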